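(* Consider the DF-SSQP algorithm described in the context and suppose (A1), (A2b) and (A3) hold. Then there exist a (possibly random) index $K^\star_{\tau\nu}<\infty$ and deterministic constants $\tilde\tau,\tilde\nu>0$ such that for all $k\ge K^\star_{\tau\nu}$, $\tau_k=\tau_{K^\star_{\tau\nu}}\ge\tilde\tau$ and $\nu_k=\nu_{K^\star_{\tau\nu}}\ge\tilde\nu$.
   Context: Problem and notation. Let $\mathcal P$ be a probability distribution on a sample space, $F(\cdot;\xi):\mathbb R^d\to\mathbb R$ for each sample $\xi$, $f(x)=\mathbb E_{\xi\sim\mathcal P}[F(x;\xi)]$, and $c:\mathbb R^d\to\mathbb R^m$. The problem is $\min_{x\in\mathbb R^d} f(x)$ subject to $c(x)=0$. Let $G(x)=\nabla c(x)\in\mathbb R^{m\times d}$ denote the constraint Jacobian, $c^j$ the $j$-th component of $c$, and $\mathcal L(x,\lambda)=f(x)+\lambda^Tc(x)$ the Lagrangian. A subscript $k$ denotes evaluation at the iterate $x_k$: $f_k=f(x_k)$, $\nabla f_k=\nabla f(x_k)$, $c_k=c(x_k)$, $G_k=G(x_k)$. For a vector $v$ with nonzero entries, $v^j$ is its $j$-th entry, $v^{-1}$ is the entrywise reciprocal and $v^{-T}=(v^{-1})^T$. Norms are Euclidean norms for vectors and operator norms for matrices. Algorithm (DF-SSQP). Inputs: $(x_0,\lambda_0)\in\mathbb R^d\times\mathbb R^m$, $\bar g_{-1}\in\mathbb R^d$, $\bar G_{-1}\in\mathbb R^{m\times d}$, $\bar B_{-1}=I$, $\tau_{-1},\nu_{-1}>0$;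 positive sequences $\{b_k\},\{\tilde b_k\},\{\alpha_k\},\{\beta_k\}$; parameters $\sigma,\epsilon\in(0,1)$, $\psi\ge0$, $p\ge1$; positive constants $\kappa_{\nabla f},\kappa_{\nabla c}$ (Lipschitz constants of $\nabla f$ and $\nabla c$); a distribution $\mathcal P_\Delta$ on $\mathbb R^d$. For $k=0,1,2,\dots$: (1) Draw $\xi_k\sim\mathcal P$ and two independent directions $\Delta_k,\tilde\Delta_k\sim\mathcal P_\Delta$. (2) Gradient estimates: $\hat\nabla F(x_k;\xi_k)=\frac{F(x_k+b_k\Delta_k;\xi_k)-F(x_k-b_k\Delta_k;\xi_k)}{2b_k}\Delta_k^{-1}$ and $\hat\nabla c(x_k)=\frac{c(x_k+b_k\Delta_k)-c(x_k-b_k\Delta_k)}{2b_k}\Delta_k^{-T}\in\mathbb R^{m\times d}$; averages $\bar g_k=(1-\beta_k)\bar g_{k-1}+\beta_k\hat\nabla F(x_k;\xi_k)$, $\bar G_k=(1-\beta_k)\bar G_{k-1}+\beta_k\hat\nabla c(x_k)$. (3) Hessian estimates: for each sign $\pm$, $\tilde\nabla F(x_k\pm b_k\Delta_k;\xi_k)=\frac{F(x_k\pm b_k\Delta_k+\tilde b_k\tilde\Delta_k;\xi_k)-F(x_k\pm b_k\Delta_k;\xi_k)}{\tilde b_k}\tilde\Delta_k^{-1}$ and $\tilde\nabla c(x_k\pm b_k\Delta_k)=\frac{c(x_k\pm b_k\Delta_k+\tilde b_k\tilde\Delta_k)-c(x_k\pm b_k\Delta_k)}{\tilde b_k}\tilde\Delta_k^{-T}$;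 $\tilde\nabla c^j$ is the transpose of the $j$-th row of $\tilde\nabla c$; $\delta\tilde\nabla F_k=\tilde\nabla F(x_k+b_k\Delta_k;\xi_k)-\tilde\nabla F(x_k-b_k\Delta_k;\xi_k)$, $\delta\tilde\nabla c^j_k=\tilde\nabla c^j(x_k+b_k\Delta_k)-\tilde\nabla c^j(x_k-b_k\Delta_k)$; $\hat\nabla^2F(x_k;\xi_k)=\frac12\big[\frac{\delta\tilde\nabla F_k}{2b_k}\Delta_k^{-T}+\Delta_k^{-1}\frac{(\delta\tilde\nabla F_k)^T}{2b_k}\big]$ and $\hat\nabla^2c^j_k=\frac12\big[\frac{\delta\tilde\nabla c^j_k}{2b_k}\Delta_k^{-T}+\Delta_k^{-1}\frac{(\delta\tilde\nabla c^j_k)^T}{2b_k}\big]$, $1\le j\le m$. (4) $\tilde G_k=\bar G_k+\delta_k^G$ with $\delta_k^G$ a perturbation making $\tilde G_k$ of full row rank; $\bar\nabla_x\mathcal L_k=\bar g_k+\tilde G_k^T\lambda_k$; $\hat\nabla_x^2\mathcal L_k=\hat\nabla^2F(x_k;\xi_k)+\sum_{j=1}^m\lambda_k^j\hat\nabla^2c^j_k$; $\bar B_k=(1-\beta_k)\bar B_{k-1}+\beta_k\hat\nabla_x^2\mathcal L_k$; $\tilde B_k=\bar B_k+\delta_k^B$ with $\delta_k^B$ a perturbation making $\tilde B_k$ positive definite on $\ker\tilde G_k$. (5) Solve $\tilde W_k\binom{\tilde\Delta x_k}{\tilde\Delta\lambda_k}=-\binom{\bar\nabla_x\mathcal L_k}{c_k}$,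 where $\tilde W_k=\begin{pmatrix}\tilde B_k&\tilde G_k^T\\ \tilde G_k&0\end{pmatrix}$. (6) With $\Delta q(d;\tau,x_k,\bar g_k,\tilde B_k)=-\tau(\bar g_k^Td+\tfrac12\max\{d^T\tilde B_kd,0\})+\|c_k\|$: let $s_k=\bar g_k^T\tilde\Delta x_k+\max\{\tilde\Delta x_k^T\tilde B_k\tilde\Delta x_k,0\}$; $\tau_k^{trial}=\infty$ if $s_k\le0$, else $\tau_k^{trial}=(1-\sigma)\|c_k\|/s_k$; $\tau_k=\tau_{k-1}$ if $\tau_{k-1}\le\tau_k^{trial}$, else $\tau_k=(1-\epsilon)\tau_k^{trial}$. Let $\nu_k^{trial}=\Delta q(\tilde\Delta x_k;\tau_k,x_k,\bar g_k,\tilde B_k)/\|\tilde\Delta x_k\|^2$; $\nu_k=\nu_{k-1}$ if $\nu_{k-1}\le\nu_k^{trial}$, else $\nu_k=(1-\epsilon)\nu_k^{trial}$. (7) Pick any (random) stepsize $\bar\alpha_k$ with $\frac{\nu_k\alpha_k}{\tau_k\kappa_{\nabla f}+\kappa_{\nabla c}}\le\bar\alpha_k\le\frac{\nu_k\alpha_k}{\tau_k\kappa_{\nabla f}+\kappa_{\nabla c}}+\psi\alpha_k^p$, and set $(x_{k+1},\lambda_{k+1})=(x_k,\lambda_k)+\bar\alpha_k(\tilde\Delta x_k,\tilde\Delta\lambda_k)$. Assumptions. (A1) There is an open convex set $\mathcal X\subseteq\mathbb R^d$ containing all points $x_k$, $x_k\pm b_k\Delta_k$, $x_k\pm b_k\Delta_k+\tilde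 b_k\tilde\Delta_k$; $f$ and $c$ are thrice differentiable with bounded first, second and third derivatives on $\mathcal X$; $f$ is bounded below on $\mathcal X$; there are constants $\kappa_c,\kappa_{1,G},\kappa_{2,G},\kappa_{1,\tilde G},\kappa_{2,\tilde G}>0$ with $\|c_k\|\le\kappa_c$, $\kappa_{1,G}I\preceq G_kG_k^T\preceq\kappa_{2,G}I$, $\kappa_{1,\tilde G}I\preceq\tilde G_k\tilde G_k^T\preceq\kappa_{2,\tilde G}I$ for all $k\ge0$; and constants $\kappa_{1,\tilde B},\kappa_{2,\tilde B}>0$ with $x^T\tilde B_kx\ge\kappa_{1,\tilde B}\|x\|^2$ for all $x$ with $\tilde G_kx=0$ and $\|\tilde B_k\|\le\kappa_{2,\tilde B}$. (A2b) For every sample $\xi$ and every $x\in\mathcal X$, $\mathbb E[F(x;\xi)\mid x]=f(x)$ and $\|\nabla F(x;\xi)-\nabla f(x)\|\le\Upsilon_m$ for a constant $\Upsilon_m>0$. (A3) $\Delta_k,\tilde\Delta_k\sim\mathcal P_\Delta$ are independent; a vector $\Delta\sim\mathcal P_\Delta$ has mutually independent entries, each symmetrically distributed about zero, with $\kappa_{\Delta_1}\le|\Delta^j|\le\kappa_{\Delta_2}$ for constants $\kappa_{\Delta_1},\kappa_{\Delta_2}>0$. *)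

From HB Require Import structures.
From mathcomp Require Import all_boot all_order all_algebra.
From mathcomp Require Import all_classical all_reals all_analysis.
Set Implicit Arguments. Unset Strict Implicit. Unset Printing Implicit Defensive.
Import Order.TTheory GRing.Theory Num.Theory.
Import numFieldNormedType.Exports.
Local Open Scope ring_scope.
Local Open Scope classical_set_scope.

Section DFSSQP.
Variables (R : realType) (d m : nat).
Local Notation V := 'cV[R]_d.

Definition dotv n (u v : 'cV[R]_n) : R := (u^T *m v) 0 0.
Definition enorm n (u : 'cV[R]_n) : R := Num.sqrt (dotv u u).

Definition vinv n (v : 'cV[R]_n) : 'cV[R]_n := \col_i (v i 0)^-1.

Definition convex_set (X : set V) :=
  forall u v (t : R), X u -> X v -> 0 <= t <= 1 -> X ((1 - t) *: u + t *: v).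

Definition has_grad (g : V -> R) (gr : V -> V) (x : V) :=
  differentiable g x /\ forall h : V, 'd g x h = dotv (gr x) h.

(* g is thrice differentiable on X with gradient g1 and bounded first, second
   and third derivatives on X: g2 is the Hessian, g3 i j the gradient of the
   (i,j) Hessian entry. *)
Definition C3_bounded (X : set V) (g : V -> R) (g1 : V -> V) :=
  exists (g2 : V -> 'M[R]_d) (g3 : 'I_d -> 'I_d -> V -> V) (M : R),
    forall x, X x ->
      [/\ has_grad g g1 x,
          (forall i, has_grad (fun y => g1 y i 0) (fun y => (row i (g2 y))^T) x),
          (forall i j, has_grad (fun y => g2 y i j) (g3 i j) x) &
          [/\ enorm (g1 x) <= M,
               (forall i j, `|g2 x i j| <= M) &
               (forall i j k, `|g3 i j x k 0| <= M)]].

Definition spF (F : V -> R) (x : V) (b : R) (D : V) : V :=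
  ((F (x + b *: D) - F (x - b *: D)) / (2 * b)) *: vinv D.
Definition spc (c : V -> 'cV[R]_m) (x : V) (b : R) (D : V) : 'M[R]_(m, d) :=
  (2 * b)^-1 *: ((c (x + b *: D) - c (x - b *: D)) *m (vinv D)^T).
Definition osF (F : V -> R) (y : V) (bt : R) (Dt : V) : V :=
  ((F (y + bt *: Dt) - F y) / bt) *: vinv Dt.
Definition osc (c : V -> 'cV[R]_m) (y : V) (bt : R) (Dt : V) : 'M[R]_(m, d) :=
  bt^-1 *: ((c (y + bt *: Dt) - c y) *m (vinv Dt)^T).
Definition hess_of (dg : V) (b : R) (D : V) : 'M[R]_d :=
  2^-1 *: (((2 * b)^-1 *: dg) *m (vinv D)^T + vinv D *m ((2 * b)^-1 *: dg)^T).
Definition hessF (F : V -> R) (x : V) (b bt : R) (D Dt : V) : 'M[R]_d :=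
  hess_of (osF F (x + b *: D) bt Dt - osF F (x - b *: D) bt Dt) b D.
Definition hessc (c : V -> 'cV[R]_m) (j : 'I_m) (x : V) (b bt : R) (D Dt : V)
  : 'M[R]_d :=
  hess_of ((row j (osc c (x + b *: D) bt Dt))^T
           - (row j (osc c (x - b *: D) bt Dt))^T) b D.
Definition hessL (F : V -> R) (c : V -> 'cV[R]_m) (lam : 'cV[R]_m)
  (x : V) (b bt : R) (D Dt : V) : 'M[R]_d :=
  hessF F x b bt D Dt + \sum_(j < m) lam j 0 *: hessc c j x b bt D Dt.

Definition quad (B : 'M[R]_d) (u : V) : R := dotv u (B *m u).
Definition Dq (u : V) (tau : R) (c : 'cV[R]_m) (g : V) (B : 'M[R]_d) : R :=
  - tau * (dotv g u + 2^-1 * Num.max (quad B u) 0) + enorm c.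

(* merit parameter update; tau_trial = +oo when s <= 0 *)
Definition tau_update (sigma eps taup : R) (c : 'cV[R]_m) (g u : V)
  (B : 'M[R]_d) : R :=
  let s := dotv g u + Num.max (quad B u) 0 in
  if s <= 0 then taup
  else let t := (1 - sigma) * enorm c / s in
       if taup <= t then taup else (1 - eps) * t.

(* ratio parameter update; nu_trial = +oo when u = 0 (convention) *)
Definition nu_update (eps nup tau : R) (c : 'cV[R]_m) (g u : V)
  (B : 'M[R]_d) : R :=
  if u == 0 then nup
  else let t := Dq u tau c g B / enorm u ^+ 2 in
       if nup <= t then nup else (1 - eps) * t.

(* value at index k-1, with the given value at index -1 *)
Definition prevk T (init : T) (s : nat -> T) (k : nat) : T :=
  match k with 0 => init | k'.+1 => s k' end.

End DFSSQP.

(* Both parameters are nonincreasing, and whenever one of them changes it is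
   multiplied by at most (1 - eps) and lands above a deterministic floor; such
   a sequence is eventually constant.  For tau the floor comes from a bound
   s_k <= C ||c_k|| on the quantity s_k in tau_trial, obtained by splitting
   Delta x_k = u + v with u in ker G~_k and v in the range of G~_k^T:
   coercivity of G~_k G~_k^T gives ||v|| <= ||c_k|| / sqrt(k1), while the
   curvature of B~_k on ker G~_k and the first KKT equation bound ||u|| by the
   norm of the averaged gradient estimate, itself bounded through the mean
   value theorem.  Once tau_k is bounded below, the same splitting bounds
   Delta q(Delta x_k) below by a multiple of ||Delta x_k||^2, which gives the
   floor for nu. *)

From Pilot Require Import Defs.
From HB Require Import structures.
From mathcomp Require Import all_boot all_order all_algebra.
From mathcomp Require Import all_classical all_reals all_analysis.
From mathcomp Require Import ring lra.
Import Order.TTheory GRing.Theory Num.Theory.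
Import numFieldNormedType.Exports.
Local Open Scope ring_scope.
Local Open Scope classical_set_scope.
Set Implicit Arguments. Unset Strict Implicit. Unset Printing Implicit Defensive.

Section EuclideanNorm.
Variables (R : realType) (n : nat).
Implicit Types (u v w : 'cV[R]_n) (a : R).

Lemma dotvE u v : dotv u v = \sum_i u i 0 * v i 0.
Proof. by rewrite /dotv !mxE; apply: eq_bigr => i _; rewrite !mxE. Qed.

Lemma dotvC u v : dotv u v = dotv v u.
Proof. by rewrite !dotvE; apply: eq_bigr => i _; rewrite mulrC. Qed.

Lemma dotvDr u v w : dotv u (v + w) = dotv u v + dotv u w.
Proof. by rewrite !dotvE -big_split; apply: eq_bigr => i _; rewrite !mxE mulrDr. Qed.

Lemma dotvDl u v w : dotv (v + w) u = dotv v u + dotv w u.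
Proof. by rewrite dotvC dotvDr !(dotvC u). Qed.

Lemma dotvZr a u v : dotv u (a *: v) = a * dotv u v.
Proof. by rewrite !dotvE mulr_sumr; apply: eq_bigr => i _; rewrite !mxE mulrCA. Qed.

Lemma dotvZl a u v : dotv (a *: v) u = a * dotv v u.
Proof. by rewrite dotvC dotvZr dotvC. Qed.

Lemma dotvNr u v : dotv u (- v) = - dotv u v.
Proof. by rewrite -scaleN1r dotvZr mulN1r. Qed.

Lemma dotvNl u v : dotv (- v) u = - dotv v u.
Proof. by rewrite dotvC dotvNr dotvC. Qed.

Lemma dotvBr u v w : dotv u (v - w) = dotv u v - dotv u w.
Proof. by rewrite dotvDr dotvNr. Qed.

Lemma dotvBl u v w : dotv (v - w) u = dotv v u - dotv w u.
Proof. by rewrite dotvDl dotvNl. Qed.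

Lemma dotv0r u : dotv u 0 = 0.
Proof. by rewrite -(scale0r 0) dotvZr mul0r. Qed.

Lemma dotv0l u : dotv 0 u = 0.
Proof. by rewrite dotvC dotv0r. Qed.

Lemma dotv_ge0 u : 0 <= dotv u u.
Proof. by rewrite dotvE; apply: sumr_ge0 => i _; rewrite -expr2 sqr_ge0. Qed.

Lemma dotv_eq0 u : (dotv u u == 0) = (u == 0).
Proof.
apply/idP/eqP => [|->]; last by rewrite dotv0l.
rewrite dotvE psumr_eq0 => [/allP u0|i _]; last by rewrite -expr2 sqr_ge0.
apply/matrixP => i j; rewrite (ord1 j) mxE.
by have := u0 i (mem_index_enum i); rewrite /= -expr2 sqrf_eq0 => /eqP.
Qed.

Lemma dotv_gt0 u : u != 0 -> 0 < dotv u u.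
Proof. by move=> u0; rewrite lt_def dotv_eq0 u0 dotv_ge0. Qed.

Lemma dotv_trmx m (A : 'M[R]_(m, n)) u (z : 'cV[R]_m) :
  dotv z (A *m u) = dotv (A^T *m z) u.
Proof. by rewrite /dotv trmx_mul trmxK mulmxA. Qed.

Lemma enorm_ge0 u : 0 <= enorm u.
Proof. exact: sqrtr_ge0. Qed.

Lemma sqr_enorm u : enorm u ^+ 2 = dotv u u.
Proof. by rewrite sqr_sqrtr // dotv_ge0. Qed.

Lemma dotv_CauchySchwarz u v : dotv u v ^+ 2 <= dotv u u * dotv v v.
Proof.
have [u0|u0] := eqVneq u 0; first by rewrite u0 !dotv0l expr0n /= mul0r.
have uu_gt0 := dotv_gt0 u0.
have := dotv_ge0 (dotv u u *: v - dotv u v *: u).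
rewrite !(dotvBl, dotvBr, dotvZl, dotvZr) (dotvC v u) => H.
have : 0 <= dotv u u * (dotv u u * dotv v v - dotv u v ^+ 2) by nra.
by rewrite pmulr_rge0 // subr_ge0.
Qed.

Lemma normr_dotv_le u v : `|dotv u v| <= enorm u * enorm v.
Proof.
rewrite -ler_sqr ?nnegrE ?mulr_ge0 ?enorm_ge0 //.
by rewrite exprMn !sqr_enorm real_normK ?num_real // dotv_CauchySchwarz.
Qed.

Lemma dotv_le u v : dotv u v <= enorm u * enorm v.
Proof. exact: le_trans (ler_norm _) (normr_dotv_le _ _). Qed.

Lemma ler_enormD u v : enorm (u + v) <= enorm u + enorm v.
Proof.
rewrite -ler_sqr ?nnegrE ?addr_ge0 ?enorm_ge0 // sqr_enorm sqrrD !sqr_enorm.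
by rewrite !(dotvDl, dotvDr) (dotvC v u); have := dotv_le u v; lra.
Qed.

Lemma enormZ a u : enorm (a *: u) = `|a| * enorm u.
Proof. by rewrite /enorm dotvZl dotvZr mulrA -expr2 sqrtrM ?sqr_ge0 // sqrtr_sqr. Qed.

Lemma enormN u : enorm (- u) = enorm u.
Proof. by rewrite /enorm dotvNl dotvNr opprK. Qed.

Lemma enorm_le_entrywise u a : 0 <= a -> (forall i, `|u i 0| <= a) ->
  enorm u <= Num.sqrt n%:R * a.
Proof.
move=> a_ge0 ua; rewrite -(ger0_norm a_ge0) -sqrtr_sqr -sqrtrM ?ler0n //.
rewrite ler_sqrt ?mulr_ge0 ?ler0n ?sqr_ge0 // dotvE.
have -> : n%:R * a ^+ 2 = \sum_(i < n) a ^+ 2 by rewrite sumr_const card_ord mulr_natl.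
apply: ler_sum => i _; rewrite -expr2 -real_normK ?num_real //.
by rewrite ler_sqr ?nnegrE ?(le_trans _ (ua i)).
Qed.

End EuclideanNorm.

Lemma eventually_constant_of_jumps (R : archiRealFieldType) (a : nat -> R) (lb delta : R) :
  0 < delta -> (forall k, lb <= a k) -> (forall k, a k.+1 = a k \/ a k.+1 <= a k - delta) ->
  exists K, forall k, (K <= k)%N -> a k = a K.
Proof.
move=> delta_gt0 a_ge a_jump.
have jump_from K j : a (K + j)%N = a K \/ a (K + j)%N <= a K - delta.
  elim: j => [|j IH]; first by rewrite addn0; left.
  rewrite addnS; case: (a_jump (K + j)%N) => [-> //|aS].
  by right; case: IH => aKj; lra.
apply: contrapT => /forallNP not_const.
have descent k : exists K, a K <= a 0%N - k%:R * delta.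
  elim: k => [|k [K aK]]; first by exists 0%N; rewrite mul0r subr0.
  have /existsNP [j /not_implyP [Kj ajK]] := not_const K.
  exists j; have := jump_from K (j - K)%N; rewrite subnKC // -natr1.
  by case=> // aj; lra.
have /archi_boundP : 0 <= (a 0%N - lb) / delta.
  by rewrite divr_ge0 ?subr_ge0 ?a_ge // ltW.
rewrite ltr_pdivrMr // => lt_bound.
by have [K aK] := descent (Num.bound ((a 0%N - lb) / delta)); have := a_ge K; lra.
Qed.

Section ShrinkingSequence.
Variables (R : archiRealFieldType) (a : nat -> R) (a0 L eps : R).
Hypotheses (a0_gt0 : 0 < a0) (L_gt0 : 0 < L) (eps_gt0 : 0 < eps).
Hypothesis a_step :
  forall k, a k = prevk a0 a k \/ (L <= a k <= (1 - eps) * prevk a0 a k).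

Lemma shrinking_seq_ge k : Num.min a0 L <= a k.
Proof.
elim: k => [|k IH].
  by case: (a_step 0%N) => [->|/andP[La _]]; rewrite ge_min ?lexx ?La ?orbT.
by case: (a_step k.+1) => [-> //|/andP[La _]]; rewrite ge_min La orbT.
Qed.

Lemma shrinking_seq_eventually_constant : exists K, forall k, (K <= k)%N -> a k = a K.
Proof.
apply: (@eventually_constant_of_jumps _ a (Num.min a0 L) (eps * Num.min a0 L)).
- by rewrite mulr_gt0 // lt_min a0_gt0.
- exact: shrinking_seq_ge.
move=> k; case: (a_step k.+1) => [->|/andP[_ aS]]; [by left | right].
have : eps * Num.min a0 L <= eps * a k by rewrite ler_pM2l // shrinking_seq_ge.
by move: aS => /=; lra.
Qed.

End ShrinkingSequence.

Section MeanValueEstimates.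
Variables (R : realType) (d : nat).
Implicit Types (X : set 'cV[R]_d) (u v : 'cV[R]_d).

(* [convex_set] is MathComp-Analysis's notion, stated with [conv]; it
   shadows the definition of the same name in [Defs]. *)
Lemma convex_set_segment X u v t : convex_set X -> X u -> X v -> 0 <= t <= 1 ->
  X ((1 - t) *: u + t *: v).
Proof.
move=> cX Xu Xv /andP[t0 t1]; rewrite addrC.
by have := cX v u (Itv01 t0 t1); rewrite !inE => /(_ Xv Xu).
Qed.

Lemma has_grad_MVT X (g : 'cV[R]_d -> R) (gr : 'cV[R]_d -> 'cV[R]_d) u v :
  convex_set X -> X u -> X v -> (forall y, X y -> has_grad g gr y) ->
  exists2 y, X y & g v - g u = dotv (gr y) (v - u).
Proof.
move=> cX Xu Xv g_grad.
pose seg t := u + t *: (v - u).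
have segE t : seg t = (1 - t) *: u + t *: v.
  by rewrite /seg scalerBr scalerBl scale1r addrCA addrC.
have Xseg t : 0 <= t <= 1 -> X (seg t) by rewrite segE; exact: convex_set_segment.
have seg_diff (t : R) :
    differentiable seg t /\ 'd seg t = ( *:%R ^~ (v - u)) :> (R -> _).
  have -> : seg = cst u + ( *:%R ^~ (v - u)) by apply/funext.
  have [dseg ->] := is_diffD (is_diff_cst u t) (is_diff_scalel t (v - u)).
  by rewrite add0r.
pose h := g \o seg.
have h_diff (t : R) : 0 <= t <= 1 ->
    differentiable h t /\ 'D_1 h t = dotv (gr (seg t)) (v - u).
  move=> t01; have [dg dgE] := g_grad _ (Xseg t t01).
  have [dseg dsegE] := seg_diff t.
  have dh : differentiable h t by apply: differentiable_comp.
  by split => //; rewrite deriveE // diff_comp //= dsegE /= scale1r dgE.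
have [t t01 ht] : exists2 t, t \in `[(0 : R), 1]%R & h 1 - h 0 = 'D_1 h t * (1 - 0).
  apply: MVT_segment => //.
    move=> t; rewrite in_itv /= => /andP[t0 t1]; apply/derivableP.
    by apply: diff_derivable; case: (h_diff t); rewrite ?ltW.
  apply: derivable_within_continuous => t; rewrite in_itv /= => t01.
  exact: diff_derivable (h_diff t t01).1.
move: t01; rewrite in_itv /= => t01; exists (seg t); first exact: Xseg.
move: ht; rewrite subr0 mulr1 (h_diff t t01).2 /h /= /seg scale0r scale1r addr0.
by rewrite [u + _]addrC subrK.
Qed.

Lemma enorm_spF_le X F (gF : 'cV[R]_d -> 'cV[R]_d) M kD1 kD2 b x D :
  convex_set X -> X (x + b *: D) -> X (x - b *: D) ->
  (forall y, X y -> has_grad F gF y) -> (forall y, X y -> enorm (gF y) <= M) ->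
  0 < b -> 0 < kD1 -> 0 <= kD2 -> (forall i, kD1 <= `|D i 0| <= kD2) ->
  enorm (spF F x b D) <= M * (d%:R * kD2 / kD1).
Proof.
move=> cX Xp Xm F_grad gF_le b_gt0 kD1_gt0 kD2_ge0 D_bd.
have [y Xy Fdiff] := has_grad_MVT cX Xm Xp F_grad.
have M_ge0 : 0 <= M := le_trans (enorm_ge0 _) (gF_le y Xy).
have D_le : enorm D <= Num.sqrt d%:R * kD2.
  by apply: enorm_le_entrywise => // i; case/andP: (D_bd i).
have Dinv_le : enorm (vinv D) <= Num.sqrt d%:R * kD1^-1.
  apply: enorm_le_entrywise => [|i]; first by rewrite invr_ge0 ltW.
  rewrite mxE normfV; case/andP: (D_bd i) => kD1_le _.
  by rewrite lef_pV2 ?posrE // (lt_le_trans kD1_gt0).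
rewrite (_ : x + b *: D - (x - b *: D) = (2 * b) *: D) in Fdiff; last first.
  by rewrite opprB addrC addrA subrK -scalerDl mulr2n mulrDl !mul1r.
rewrite /spF enormZ Fdiff dotvZr mulrAC divff ?mul1r ?mulf_neq0 ?gt_eqF //.
apply: le_trans (ler_wpM2r (enorm_ge0 _) (normr_dotv_le _ _)) _.
have -> : M * (d%:R * kD2 / kD1) = M * (Num.sqrt d%:R * kD2) * (Num.sqrt d%:R * kD1^-1).
  by rewrite -{1}(sqr_sqrtr (ler0n R d)); ring.
by rewrite !ler_pM ?mulr_ge0 ?enorm_ge0 ?gF_le.
Qed.

End MeanValueEstimates.

Section KernelRangeSplit.
Variables (R : realType) (m d : nat) (k1 : R) (A : 'M[R]_(m, d)).
Hypothesis k1_gt0 : 0 < k1.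
Hypothesis AAt_ge : forall w, k1 * dotv w w <= dotv w (A *m A^T *m w).

Lemma mulmx_trmx_unit : A *m A^T \in unitmx.
Proof.
rewrite unitmxE unitfE; apply/negP => /det0P [z z_neq0 zM].
have Mz : A *m A^T *m z^T = 0.
  by apply: trmx_inj; rewrite !trmx_mul !trmxK zM trmx0.
have zT_neq0 : z^T != 0 by rewrite trmx_eq0.
by have := AAt_ge z^T; rewrite Mz dotv0r pmulr_rle0 // leNgt dotv_gt0.
Qed.

Lemma dotv_kernel_trmx u z : A *m u = 0 -> dotv u (A^T *m z) = 0.
Proof. by move=> Au; rewrite dotv_trmx trmxK Au dotv0l. Qed.

Lemma range_trmx_le w : k1 * enorm (A^T *m w) ^+ 2 <= enorm (A *m A^T *m w) ^+ 2.
Proof.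
set v := A^T *m w; rewrite -mulmxA -/v.
have v_sqr : enorm v ^+ 2 = dotv w (A *m v) by rewrite sqr_enorm dotv_trmx.
have v_le : enorm v ^+ 2 <= enorm w * enorm (A *m v).
  by rewrite v_sqr dotv_le.
have w_le : k1 * enorm w ^+ 2 <= enorm v ^+ 2.
  by rewrite v_sqr sqr_enorm /v mulmxA AAt_ge.
have := sqr_ge0 (enorm v); rewrite le_eqVlt => /orP[/eqP <-|v_gt0].
  by rewrite mulr0 sqr_ge0.
rewrite -(ler_pM2r v_gt0).
apply: le_trans (_ : k1 * ((enorm w * enorm (A *m v)) ^+ 2) <= _).
  by rewrite -mulrA ler_pM2l // -expr2 ler_sqr ?nnegrE ?mulr_ge0 ?enorm_ge0 ?sqr_ge0.
rewrite (_ : k1 * (enorm w * enorm (A *m v)) ^+ 2 =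
  enorm (A *m v) ^+ 2 * (k1 * enorm w ^+ 2)); last by ring.
by rewrite ler_wpM2l ?sqr_ge0.
Qed.

Lemma kernel_range_split z : exists u v, [/\ z = u + v, A *m u = 0,
  A *m v = A *m z, dotv u v = 0 & k1 * enorm v ^+ 2 <= enorm (A *m z) ^+ 2].
Proof.
pose w := invmx (A *m A^T) *m (A *m z).
have Aw : A *m A^T *m w = A *m z by rewrite mulmxA mulmxV ?mulmx_trmx_unit // mul1mx.
have Au : A *m (z - A^T *m w) = 0 by rewrite mulmxBr mulmxA Aw subrr.
exists (z - A^T *m w), (A^T *m w); split.
- by rewrite subrK.
- exact: Au.
- by rewrite mulmxA.
- exact: dotv_kernel_trmx.
- by rewrite -Aw range_trmx_le.
Qed.

Lemma dotv_kernel_kkt u B (g dx : 'cV[R]_d) (dl lam : 'cV[R]_m) : A *m u = 0 ->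
  B *m dx + A^T *m dl = - (g + A^T *m lam) -> dotv u (B *m dx) = - dotv u g.
Proof.
move=> Au /(congr1 (dotv u)).
by rewrite dotvDr dotvNr dotvDr !dotv_kernel_trmx // !addr0.
Qed.

End KernelRangeSplit.

Lemma scale_le_max0 (R : realDomainType) (x theta : R) :
  0 <= theta <= 1 -> theta * x <= Num.max x 0.
Proof. by case/andP=> theta_ge0 theta_le1; case: (leP 0 x) => x0; nra. Qed.

Section SQPStep.
Variables (R : realType) (m d : nat) (k1 k1B k2B Gam kap : R).
Variables (B : 'M[R]_d) (g u v dx : 'cV[R]_d) (cc : 'cV[R]_m).
Hypotheses (k1_gt0 : 0 < k1) (k1B_gt0 : 0 < k1B) (k2B_gt0 : 0 < k2B).
Hypotheses (Gam_ge0 : 0 <= Gam) (kap_gt0 : 0 < kap).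
Hypothesis dx_split : dx = u + v.
Hypothesis uv_orth : dotv u v = 0.
Hypothesis u_quad_ge : k1B * enorm u ^+ 2 <= quad B u.
Hypothesis B_le : forall z, enorm (B *m z) <= k2B * enorm z.
Hypothesis g_le : enorm g <= Gam.
Hypothesis u_kkt : dotv u (B *m dx) = - dotv u g.
Hypothesis v_le : k1 * enorm v ^+ 2 <= enorm cc ^+ 2.
Hypothesis cc_le : enorm cc <= kap.

Lemma normr_dotv_mulmx_le z z' : `|dotv z (B *m z')| <= k2B * enorm z * enorm z'.
Proof.
apply: le_trans (normr_dotv_le _ _) _.
by rewrite (mulrC k2B) -mulrA ler_wpM2l ?enorm_ge0.
Qed.

Lemma normr_dotv_g_le z : `|dotv g z| <= Gam * enorm z.
Proof. by apply: le_trans (normr_dotv_le _ _) _; rewrite ler_wpM2r ?enorm_ge0. Qed.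

Lemma enorm_step_le : enorm dx <= enorm u + enorm v.
Proof. by rewrite dx_split ler_enormD. Qed.

Lemma sqr_enorm_step : enorm dx ^+ 2 = enorm u ^+ 2 + enorm v ^+ 2.
Proof.
rewrite !sqr_enorm dx_split !(dotvDl, dotvDr) (dotvC v u) uv_orth.
by rewrite addr0 add0r.
Qed.

Lemma tangential_le : k1B * enorm u <= Gam + k2B * enorm v.
Proof.
have quad_u : quad B u = - dotv u g - dotv u (B *m v).
  by rewrite -u_kkt dx_split mulmxDr dotvDr addrK.
have /ler_normlP [ug _] : `|dotv u g| <= enorm u * Gam.
  by rewrite dotvC mulrC normr_dotv_g_le.
have /ler_normlP [uBv _] := normr_dotv_mulmx_le u v.
have := enorm_ge0 u; rewrite le_eqVlt => /orP[/eqP <-|u_gt0].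
  by rewrite mulr0 addr_ge0 // mulr_ge0 ?enorm_ge0 // ltW.
rewrite -(ler_pM2l u_gt0) mulrCA -expr2 mulrDr.
by move: u_quad_ge; rewrite quad_u; lra.
Qed.

Lemma slope_le : dotv g dx + Num.max (quad B dx) 0
  <= enorm v * (Gam + k2B * (enorm u + enorm v)).
Proof.
have quad_dx : quad B dx = - dotv u g + dotv v (B *m dx).
  by rewrite /quad {1}dx_split dotvDl u_kkt.
have g_dx : dotv g dx = dotv u g + dotv g v by rewrite dx_split dotvDr dotvC.
have /ler_normlP [_ gv] := normr_dotv_g_le v.
have /ler_normlP [_ vBdx] := normr_dotv_mulmx_le v dx.
have /ler_normlP [uBv _] := normr_dotv_mulmx_le u v.
have vdx : k2B * enorm v * enorm dx <= k2B * enorm v * (enorm u + enorm v).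
  by rewrite ler_wpM2l ?enorm_step_le // mulr_ge0 ?enorm_ge0 // ltW.
have u_gu : dotv u g = - quad B u - dotv u (B *m v).
  by rewrite -[dotv u g]opprK -u_kkt dx_split mulmxDr dotvDr opprD.
have quad_u_ge0 : 0 <= quad B u.
  by apply: le_trans u_quad_ge; rewrite mulr_ge0 ?sqr_ge0 // ltW.
have vv_ge0 : 0 <= k2B * enorm v * enorm v by rewrite !mulr_ge0 ?enorm_ge0 // ltW.
rewrite g_dx; case: (leP 0 (quad B dx)) => [q_ge0|q_lt0].
  by rewrite quad_dx; move: vdx; rewrite !mulrDr; lra.
by rewrite addr0 u_gu !mulrDr; lra.
Qed.

Lemma quad_step_ge : k1B * enorm u ^+ 2 - k2B * (2 * enorm u + enorm v) * enorm v
  <= quad B dx.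
Proof.
have quad_dx : quad B dx = quad B u + dotv u (B *m v) + dotv v (B *m dx).
  by rewrite /quad {1}dx_split dotvDl {1}dx_split mulmxDr dotvDr.
have /ler_normlP [uBv _] := normr_dotv_mulmx_le u v.
have /ler_normlP [vBdx _] := normr_dotv_mulmx_le v dx.
have vdx : k2B * enorm v * enorm dx <= k2B * enorm v * (enorm u + enorm v).
  by rewrite ler_wpM2l ?enorm_step_le // mulr_ge0 ?enorm_ge0 // ltW.
by rewrite quad_dx; move: vdx u_quad_ge; lra.
Qed.

Definition normal_gain := Num.sqrt k1^-1.
Definition tangential_bound := (Gam + k2B * (normal_gain * kap)) / k1B.
Definition slope_const :=
  (Gam + k2B * (tangential_bound + normal_gain * kap)) * normal_gain.
Definition curvature_defect :=
  k2B * (2 * tangential_bound + normal_gain * kap) * normal_gain.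
(* Half of the decrease sigma ||c|| pays for the normal part of the step, the
   other half together with tau max(q, 0) for the tangential part; theta is
   chosen so that taut theta curvature_defect <= sigma. *)
Definition model_const (sigma taut : R) :=
  let theta := sigma / (sigma + taut * curvature_defect) in
  Num.min (sigma * k1 / (2 * kap)) (taut * theta * k1B / 2).

Lemma normal_gain_gt0 : 0 < normal_gain.
Proof. by rewrite sqrtr_gt0 invr_gt0. Qed.

Lemma tangential_bound_ge0 : 0 <= tangential_bound.
Proof.
have r_kap := mulr_ge0 (ltW normal_gain_gt0) (ltW kap_gt0).
exact: divr_ge0 (addr_ge0 Gam_ge0 (mulr_ge0 (ltW k2B_gt0) r_kap)) (ltW k1B_gt0).
Qed.

Lemma slope_const_gt0 : 0 < slope_const.
Proof.
have r_kap := mulr_gt0 normal_gain_gt0 kap_gt0.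
rewrite /slope_const mulr_gt0 ?normal_gain_gt0 // ltr_wpDl // mulr_gt0 //.
by rewrite ltr_wpDl ?tangential_bound_ge0.
Qed.

Lemma curvature_defect_ge0 : 0 <= curvature_defect.
Proof.
have r_kap := mulr_ge0 (ltW normal_gain_gt0) (ltW kap_gt0).
have Ub2_ge0 := mulr_ge0 (ler0n R 2) tangential_bound_ge0.
exact: mulr_ge0 (mulr_ge0 (ltW k2B_gt0) (addr_ge0 Ub2_ge0 r_kap)) (ltW normal_gain_gt0).
Qed.

Lemma model_const_gt0 sigma taut : 0 < sigma -> 0 < taut -> 0 < model_const sigma taut.
Proof.
move=> sigma_gt0 taut_gt0.
have den_gt0 : 0 < sigma + taut * curvature_defect.
  by have := mulr_ge0 (ltW taut_gt0) curvature_defect_ge0; lra.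
by rewrite /model_const lt_min !mulr_gt0 ?invr_gt0 ?mulr_gt0.
Qed.

Lemma normal_le_gain : enorm v <= normal_gain * enorm cc.
Proof.
rewrite -ler_sqr ?nnegrE ?mulr_ge0 ?enorm_ge0 ?(ltW normal_gain_gt0) //.
by rewrite exprMn [normal_gain ^+ 2]sqr_sqrtr ?invr_ge0 ?(ltW k1_gt0) // ler_pdivlMl.
Qed.

Lemma normal_le_kap : enorm v <= normal_gain * kap.
Proof.
by apply: le_trans normal_le_gain _; rewrite ler_wpM2l ?(ltW normal_gain_gt0).
Qed.

Lemma tangential_le_bound : enorm u <= tangential_bound.
Proof.
rewrite ler_pdivlMr // mulrC; apply: le_trans tangential_le _.
by rewrite lerD2l ler_wpM2l ?normal_le_kap ?(ltW k2B_gt0).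
Qed.

Lemma slope_le_const : dotv g dx + Num.max (quad B dx) 0 <= slope_const * enorm cc.
Proof.
apply: le_trans slope_le _; rewrite /slope_const -mulrA mulrC.
apply: ler_pM; rewrite ?enorm_ge0 ?normal_le_gain //.
  by rewrite addr_ge0 ?mulr_ge0 ?addr_ge0 ?enorm_ge0 ?(ltW k2B_gt0).
by rewrite lerD2l ler_wpM2l ?(ltW k2B_gt0) ?lerD ?tangential_le_bound ?normal_le_kap.
Qed.

Lemma quad_step_ge_defect :
  k1B * enorm u ^+ 2 - curvature_defect * enorm cc <= quad B dx.
Proof.
apply: le_trans quad_step_ge; rewrite lerD2l lerN2 /curvature_defect -mulrA -!mulrA.
rewrite ler_wpM2l ?(ltW k2B_gt0) //; apply: ler_pM; rewrite ?enorm_ge0 ?normal_le_gain //.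
  by rewrite addr_ge0 ?mulr_ge0 ?enorm_ge0.
by rewrite lerD ?ler_wpM2l ?tangential_le_bound ?normal_le_kap.
Qed.

Lemma model_reduction_ge sigma taut tau : 0 < sigma -> 0 < taut -> taut <= tau ->
  tau * (dotv g dx + Num.max (quad B dx) 0) <= (1 - sigma) * enorm cc ->
  model_const sigma taut * enorm dx ^+ 2 <= Dq dx tau cc g B.
Proof.
move=> sigma_gt0 taut_gt0 taut_le decrease.
have E_ge0 := curvature_defect_ge0.
set E := curvature_defect in E_ge0 *.
have den_gt0 : 0 < sigma + taut * E by have := mulr_ge0 (ltW taut_gt0) E_ge0; lra.
set theta := sigma / (sigma + taut * E).
have theta_ge0 : 0 <= theta by rewrite divr_ge0 ?ltW.
have theta_le1 : theta <= 1.
  by rewrite ler_pdivrMr // mul1r lerDl mulr_ge0 // ltW.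
have theta_E : taut * theta * E <= sigma.
  have : theta * (sigma + taut * E) = sigma by rewrite divfK ?gt_eqF.
  by have := mulr_ge0 theta_ge0 (ltW sigma_gt0); nra.
set M := Num.max (quad B dx) 0.
have M_ge0 : 0 <= M by rewrite le_max lexx orbT.
have tauM : taut * theta * (k1B * enorm u ^+ 2 - E * enorm cc) <= tau * M.
  apply: le_trans (_ : taut * theta * quad B dx <= _).
    by rewrite ler_wpM2l ?quad_step_ge_defect // mulr_ge0 // ltW.
  rewrite -mulrA; apply: le_trans (_ : taut * M <= _); last by rewrite ler_wpM2r.
  by rewrite ler_wpM2l ?scale_le_max0 ?theta_ge0 // ltW.
have v_small : sigma * k1 / (2 * kap) * enorm v ^+ 2 <= sigma / 2 * enorm cc.
  have cc_sqr : enorm cc ^+ 2 <= kap * enorm cc by rewrite expr2 ler_wpM2r ?enorm_ge0.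
  rewrite (_ : sigma * k1 / (2 * kap) * _ = sigma / (2 * kap) * (k1 * enorm v ^+ 2)).
    rewrite (_ : sigma / 2 * _ = sigma / (2 * kap) * (kap * enorm cc)); last first.
      by field; rewrite gt_eqF.
    by rewrite ler_wpM2l ?(le_trans v_le) // divr_ge0 ?mulr_ge0 // ltW.
  by ring.
have cc_ge0 := enorm_ge0 cc.
have thetaEC := ler_wpM2r cc_ge0 theta_E.
rewrite sqr_enorm_step /Dq -/M mulrDr.
have min_a :
    model_const sigma taut * enorm v ^+ 2 <= sigma * k1 / (2 * kap) * enorm v ^+ 2.
  by rewrite ler_wpM2r ?sqr_ge0 // ge_min lexx.
have min_b :
    model_const sigma taut * enorm u ^+ 2 <= taut * theta * k1B / 2 * enorm u ^+ 2.
  by rewrite ler_wpM2r ?sqr_ge0 // ge_min lexx orbT.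
move: decrease tauM; rewrite -/M; lra.
Qed.

End SQPStep.

Section SQPIteration.
Variables (R : realType) (m d : nat) (k1 k1B k2B Gam kap : R).
Variables (A : 'M[R]_(m, d)) (B : 'M[R]_d) (g dx : 'cV[R]_d) (dl lam cc : 'cV[R]_m).
Hypotheses (k1_gt0 : 0 < k1) (k1B_gt0 : 0 < k1B) (k2B_gt0 : 0 < k2B).
Hypotheses (Gam_ge0 : 0 <= Gam) (kap_gt0 : 0 < kap).
Hypothesis AAt_ge : forall w, k1 * dotv w w <= dotv w (A *m A^T *m w).
Hypothesis B_ker_ge : forall u, A *m u = 0 -> k1B * enorm u ^+ 2 <= quad B u.
Hypothesis B_le : forall u, enorm (B *m u) <= k2B * enorm u.
Hypothesis g_le : enorm g <= Gam.
Hypothesis kkt_dual : B *m dx + A^T *m dl = - (g + A^T *m lam).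
Hypothesis kkt_primal : A *m dx = - cc.
Hypothesis cc_le : enorm cc <= kap.

Lemma sqp_slope_le :
  dotv g dx + Num.max (quad B dx) 0 <= slope_const k1 k1B k2B Gam kap * enorm cc.
Proof.
have [u [v [dx_uv Au Av uv]]] := kernel_range_split k1_gt0 AAt_ge dx.
rewrite kkt_primal enormN => v_le.
apply: (slope_le_const (u := u) (v := v)) => //; first exact: B_ker_ge.
exact: dotv_kernel_kkt kkt_dual.
Qed.

Lemma sqp_model_reduction_ge sigma taut tau : 0 < sigma -> 0 < taut -> taut <= tau ->
  tau * (dotv g dx + Num.max (quad B dx) 0) <= (1 - sigma) * enorm cc ->
  model_const k1 k1B k2B Gam kap sigma taut * enorm dx ^+ 2 <= Dq dx tau cc g B.
Proof.
have [u [v [dx_uv Au Av uv]]] := kernel_range_split k1_gt0 AAt_ge dx.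
rewrite kkt_primal enormN => v_le.
apply: (model_reduction_ge (u := u) (v := v)) => //; first exact: B_ker_ge.
exact: dotv_kernel_kkt kkt_dual.
Qed.

End SQPIteration.

Section ParameterUpdates.
Variables (R : realType) (m d : nat).
Implicit Types (cc : 'cV[R]_m) (g u : 'cV[R]_d) (B : 'M[R]_d).

Lemma shrink_update_cases (eps prev t L : R) : eps <= 1 -> L <= t ->
  let y := if prev <= t then prev else (1 - eps) * t in
  y = prev \/ (1 - eps) * L <= y <= (1 - eps) * prev.
Proof.
move=> eps_le1 L_le /=; case: ifPn => [_|]; first by left.
by rewrite -ltNge => t_lt; right; rewrite !ler_wpM2l ?subr_ge0 // ltW.
Qed.

Lemma tau_update_cases sigma eps taup cc g u B Cs :
  0 < Cs -> sigma <= 1 -> eps <= 1 ->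
  dotv g u + Num.max (quad B u) 0 <= Cs * enorm cc ->
  let tau := tau_update sigma eps taup cc g u B in
  tau = taup \/ (1 - eps) * ((1 - sigma) / Cs) <= tau <= (1 - eps) * taup.
Proof.
move=> Cs_gt0 sigma_le1 eps_le1 slope_le /=; rewrite /tau_update.
case: ifPn => [_|]; first by left.
rewrite -ltNge => s_gt0; apply: shrink_update_cases => //.
rewrite ler_pdivlMr // mulrAC ler_pdivrMr // -mulrA ler_wpM2l ?subr_ge0 //.
by rewrite (mulrC (enorm cc)).
Qed.

Lemma tau_update_decrease sigma eps taup cc g u B :
  0 < taup -> sigma <= 1 -> 0 <= eps <= 1 ->
  let s := dotv g u + Num.max (quad B u) 0 in
  tau_update sigma eps taup cc g u B * s <= (1 - sigma) * enorm cc.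
Proof.
move=> taup_gt0 sigma_le1 /andP[eps_ge0 eps_le1] /=; rewrite /tau_update.
set s := dotv g u + _; have c_ge0 : 0 <= (1 - sigma) * enorm cc.
  by rewrite mulr_ge0 ?subr_ge0 ?enorm_ge0.
case: ifPn => [s_le0|]; first by apply: le_trans c_ge0; rewrite pmulr_rle0.
rewrite -ltNge => s_gt0.
have t_s : (1 - sigma) * enorm cc / s * s = (1 - sigma) * enorm cc.
  by rewrite divfK ?gt_eqF.
case: ifPn => [taup_le|_]; first by rewrite -t_s ler_wpM2r // ltW.
by rewrite -[(1 - eps) * _ * s]mulrA t_s ler_piMl //; lra.
Qed.

Lemma nu_update_cases eps nup tau cc g u B N : eps <= 1 ->
  N * enorm u ^+ 2 <= Dq u tau cc g B ->
  let nu := nu_update eps nup tau cc g u B in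
  nu = nup \/ (1 - eps) * N <= nu <= (1 - eps) * nup.
Proof.
move=> eps_le1 model_ge /=; rewrite /nu_update.
case: eqP => [_|/eqP u_neq0]; first by left.
apply: shrink_update_cases => //.
by rewrite ler_pdivlMr // sqr_enorm dotv_gt0.
Qed.

End ParameterUpdates.

Lemma enorm_gradF_bounded (R : realType) d (T : Type) (X : set 'cV[R]_d) f
    (gradf : 'cV[R]_d -> 'cV[R]_d) (gradF : T -> 'cV[R]_d -> 'cV[R]_d) (Ups : R) :
  C3_bounded X f gradf -> (forall xi x, X x -> enorm (gradF xi x - gradf x) <= Ups) ->
  exists M, forall xi x, X x -> enorm (gradF xi x) <= M.
Proof.
case=> g2 [g3 [M f_C3]] gradF_near; exists (M + Ups) => xi x Xx.
have [_ _ _ [gradf_le _ _]] := f_C3 x Xx.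
rewrite -(subrK (gradf x) (gradF xi x)) addrC.
by apply: le_trans (ler_enormD _ _) _; rewrite lerD ?gradF_near.
Qed.

Lemma enorm_average_le (R : realType) n (a s : nat -> 'cV[R]_n) (init : 'cV[R]_n)
    (beta : nat -> R) (Gam : R) :
  (forall k, 0 < beta k <= 1) -> enorm init <= Gam -> (forall k, enorm (s k) <= Gam) ->
  (forall k, a k = (1 - beta k) *: prevk init a k + beta k *: s k) ->
  forall k, enorm (a k) <= Gam.
Proof.
move=> beta01 init_le s_le a_def.
have average_le k y : enorm y <= Gam -> enorm ((1 - beta k) *: y + beta k *: s k) <= Gam.
  move=> y_le; have /andP[beta_gt0 beta_le1] := beta01 k.
  have beta_le1' : 0 <= 1 - beta k by rewrite subr_ge0.
  apply: le_trans (ler_enormD _ _) _; rewrite !enormZ ger0_norm ?subr_ge0 // gtr0_norm //.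
  have := ler_wpM2l (ltW beta_gt0) (s_le k).
  have := ler_wpM2l beta_le1' y_le.
  lra.
by elim=> [|k IH]; rewrite a_def average_le.
Qed.

Section ParameterSequences.
Variables (R : realType) (m d : nat) (sigma eps taum1 num1 Cs N : R).
Variables (cc : nat -> 'cV[R]_m) (g dx : nat -> 'cV[R]_d) (B : nat -> 'M[R]_d).
Variables (tau nu : nat -> R).
Hypotheses (sigma_lt1 : sigma < 1) (eps_gt0 : 0 < eps) (eps_lt1 : eps < 1).
Hypotheses (taum1_gt0 : 0 < taum1) (num1_gt0 : 0 < num1).
Hypotheses (Cs_gt0 : 0 < Cs) (N_gt0 : 0 < N).

Local Notation s k := (dotv (g k) (dx k) + Num.max (quad (B k) (dx k)) 0).
Local Notation tau_floor := (Num.min taum1 ((1 - eps) * ((1 - sigma) / Cs))).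

Hypothesis tau_def : forall k,
  tau k = tau_update sigma eps (prevk taum1 tau k) (cc k) (g k) (dx k) (B k).
Hypothesis nu_def : forall k,
  nu k = nu_update eps (prevk num1 nu k) (tau k) (cc k) (g k) (dx k) (B k).
Hypothesis slope_le : forall k, s k <= Cs * enorm (cc k).
Hypothesis model_ge : forall k t, tau_floor <= t -> t * s k <= (1 - sigma) * enorm (cc k) ->
  N * enorm (dx k) ^+ 2 <= Dq (dx k) t (cc k) (g k) (B k).

Lemma merit_param_step k : tau k = prevk taum1 tau k \/
  (1 - eps) * ((1 - sigma) / Cs) <= tau k <= (1 - eps) * prevk taum1 tau k.
Proof.
by rewrite tau_def; apply: tau_update_cases; rewrite ?(ltW sigma_lt1) ?(ltW eps_lt1).
Qed.

Lemma merit_param_ge k : tau_floor <= tau k.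
Proof. exact: (shrinking_seq_ge merit_param_step k). Qed.

Lemma merit_param_decrease k : tau k * s k <= (1 - sigma) * enorm (cc k).
Proof.
have tau_prev_gt0 : 0 < prevk taum1 tau k.
  case: k => [|k] //=; apply: lt_le_trans (merit_param_ge k).
  by rewrite lt_min taum1_gt0 mulr_gt0 ?divr_gt0 ?subr_gt0.
rewrite tau_def; apply: tau_update_decrease => //; first exact: ltW.
by rewrite (ltW eps_gt0) (ltW eps_lt1).
Qed.

Lemma ratio_param_step k : nu k = prevk num1 nu k \/
  (1 - eps) * N <= nu k <= (1 - eps) * prevk num1 nu k.
Proof.
rewrite nu_def; apply: nu_update_cases; first exact: ltW.
exact: model_ge (merit_param_ge k) (merit_param_decrease k).
Qed.

Lemma parameters_eventually_constant : exists K, forall k, (K <= k)%N ->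
  [/\ tau k = tau K, tau_floor <= tau K, nu k = nu K & Num.min num1 ((1 - eps) * N) <= nu K].
Proof.
have [Ktau tau_const] : exists K, forall k, (K <= k)%N -> tau k = tau K.
  apply: shrinking_seq_eventually_constant merit_param_step => //.
  by rewrite mulr_gt0 ?divr_gt0 ?subr_gt0.
have [Knu nu_const] : exists K, forall k, (K <= k)%N -> nu k = nu K.
  by apply: shrinking_seq_eventually_constant ratio_param_step; rewrite ?mulr_gt0 ?subr_gt0.
exists (maxn Ktau Knu) => k le_k.
have /andP[le_Ktau le_Knu] : (Ktau <= k)%N && (Knu <= k)%N by rewrite -geq_max.
rewrite (tau_const k) // (tau_const (maxn _ _)) ?leq_maxl //.
rewrite (nu_const k) // (nu_const (maxn _ _)) ?leq_maxr //.
by split; [|exact: merit_param_ge| |exact: (shrinking_seq_ge ratio_param_step)].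
Qed.

End ParameterSequences.

Theorem lemma3p9 (R : realType) (d m : nat)
  (* problem data *)
  (dXi : measure_display) (Xi : measurableType dXi) (P : probability Xi R)
  (F : 'cV[R]_d -> Xi -> R) (f : 'cV[R]_d -> R) (gradf : 'cV[R]_d -> 'cV[R]_d)
  (gradF : Xi -> 'cV[R]_d -> 'cV[R]_d)
  (c : 'cV[R]_d -> 'cV[R]_m) (G : 'cV[R]_d -> 'M[R]_(m, d))
  (X : set 'cV[R]_d)
  (* algorithm inputs *)
  (x0 : 'cV[R]_d) (lam0 : 'cV[R]_m) (gm1 : 'cV[R]_d) (Gm1 : 'M[R]_(m, d))
  (taum1 num1 : R) (b bt alpha beta : nat -> R)
  (sigma eps psi p kf kc : R)
  (* constants of the assumptions *)
  (kap_c k1G k2G k1Gt k2Gt k1B k2B Ups kD1 kD2 : R) :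
  (* algorithm parameters *)
  0 < taum1 -> 0 < num1 ->
  (forall k, 0 < b k) -> (forall k, 0 < bt k) ->
  (forall k, 0 < alpha k) -> (forall k, 0 < beta k <= 1) ->
  0 < sigma < 1 -> 0 < eps < 1 -> 0 <= psi -> 1 <= p -> 0 < kf -> 0 < kc ->
  (* kf, kc are Lipschitz constants of grad f and grad c *)
  (forall x y, X x -> X y -> enorm (gradf x - gradf y) <= kf * enorm (x - y)) ->
  (forall x y, X x -> X y -> forall u : 'cV[R]_d,
      enorm ((G x - G y) *m u) <= kc * enorm (x - y) * enorm u) ->
  (* (A1): problem-level part *)
  open X -> convex_set X ->
  C3_bounded X f gradf ->
  (forall j : 'I_m, C3_bounded X (fun x => c x j 0) (fun x => (row j (G x))^T)) ->
  (exists lb : R, forall x, X x -> lb <= f x) ->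
  0 < kap_c -> 0 < k1G -> 0 < k2G -> 0 < k1Gt -> 0 < k2Gt -> 0 < k1B -> 0 < k2B ->
  (* (A2b) *)
  (forall x, X x ->
     P.-integrable setT (fun xi => (F x xi)%:E) /\
     (\int[P]_xi (F x xi)%:E = (f x)%:E)%E) ->
  (forall xi x, X x -> has_grad (F^~ xi) (gradF xi) x) ->
  0 < Ups ->
  (forall xi x, X x -> enorm (gradF xi x - gradf x) <= Ups) ->
  (* (A3): bounds on the entries of the random directions *)
  0 < kD1 -> 0 < kD2 ->
  (* conclusion: deterministic constants, then every run of DF-SSQP *)
  exists taut nut : R, 0 < taut /\ 0 < nut /\
  forall (xi : nat -> Xi) (D Dt : nat -> 'cV[R]_d)
    (dG : nat -> 'M[R]_(m, d)) (dB : nat -> 'M[R]_d) (abar : nat -> R)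
    (x : nat -> 'cV[R]_d) (lam : nat -> 'cV[R]_m)
    (gbar : nat -> 'cV[R]_d) (Gbar Gt : nat -> 'M[R]_(m, d))
    (Bbar Bt : nat -> 'M[R]_d)
    (dx : nat -> 'cV[R]_d) (dl : nat -> 'cV[R]_m) (tau nu : nat -> R),
  (* (A3) for the realized directions *)
  (forall k i, kD1 <= `|D k i 0| <= kD2) ->
  (forall k i, kD1 <= `|Dt k i 0| <= kD2) ->
  (* the DF-SSQP recursion *)
  x 0%N = x0 -> lam 0%N = lam0 ->
  (forall k, gbar k = (1 - beta k) *: prevk gm1 gbar k
                      + beta k *: spF (F^~ (xi k)) (x k) (b k) (D k)) ->
  (forall k, Gbar k = (1 - beta k) *: prevk Gm1 Gbar k
                      + beta k *: spc c (x k) (b k) (D k)) ->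
  (forall k, Bbar k = (1 - beta k) *: prevk 1%:M Bbar k
                      + beta k *: hessL (F^~ (xi k)) c (lam k) (x k)
                                    (b k) (bt k) (D k) (Dt k)) ->
  (forall k, Gt k = Gbar k + dG k) ->
  (forall k, row_free (Gt k)) ->
  (forall k, Bt k = Bbar k + dB k) ->
  (forall k, forall u, Gt k *m u = 0 -> u != 0 -> 0 < quad (Bt k) u) ->
  (forall k, Bt k *m dx k + (Gt k)^T *m dl k
             = - (gbar k + (Gt k)^T *m lam k)) ->
  (forall k, Gt k *m dx k = - c (x k)) ->
  (forall k, tau k = tau_update sigma eps (prevk taum1 tau k)
                       (c (x k)) (gbar k) (dx k) (Bt k)) ->
  (forall k, nu k = nu_update eps (prevk num1 nu k) (tau k)
                      (c (x k)) (gbar k) (dx k) (Bt k)) ->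
  (forall k, nu k * alpha k / (tau k * kf + kc) <= abar k <=
             nu k * alpha k / (tau k * kf + kc) + psi * alpha k `^ p) ->
  (forall k, x k.+1 = x k + abar k *: dx k) ->
  (forall k, lam k.+1 = lam k + abar k *: dl k) ->
  (* (A1): iterate-level part *)
  (forall k, [/\ X (x k), X (x k + b k *: D k), X (x k - b k *: D k),
                 X (x k + b k *: D k + bt k *: Dt k) &
                 X (x k - b k *: D k + bt k *: Dt k)]) ->
  (forall k, enorm (c (x k)) <= kap_c) ->
  (forall k (v : 'cV[R]_m),
      k1G * dotv v v <= dotv v (G (x k) *m (G (x k))^T *m v) <= k2G * dotv v v) ->
  (forall k (v : 'cV[R]_m),
      k1Gt * dotv v v <= dotv v (Gt k *m (Gt k)^T *m v) <= k2Gt * dotv v v) ->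
  (forall k u, Gt k *m u = 0 -> k1B * enorm u ^+ 2 <= quad (Bt k) u) ->
  (forall k u, enorm (Bt k *m u) <= k2B * enorm u) ->
  exists K : nat, forall k : nat, (K <= k)%N ->
    [/\ tau k = tau K, taut <= tau K, nu k = nu K & nut <= nu K].
Proof.
move=> taum1_gt0 num1_gt0 b_gt0 _ _ beta01 /andP[sigma_gt0 sigma_lt1]
  /andP[eps_gt0 eps_lt1] _ _ _ _ _ _ _ cX f_C3 _ _ kap_gt0 _ _ k1Gt_gt0 _ k1B_gt0 k2B_gt0 _
  F_grad _ gradF_near kD1_gt0 kD2_gt0.
have [M gradF_le] := enorm_gradF_bounded f_C3 gradF_near.
set Gam := Num.max (enorm gm1) (M * (d%:R * kD2 / kD1)).
have Gam_ge0 : 0 <= Gam by rewrite le_max enorm_ge0.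
set Cs := slope_const k1Gt k1B k2B Gam kap_c.
have Cs_gt0 : 0 < Cs := slope_const_gt0 k1Gt_gt0 k1B_gt0 k2B_gt0 Gam_ge0 kap_gt0.
set taut := Num.min taum1 ((1 - eps) * ((1 - sigma) / Cs)).
set N := model_const k1Gt k1B k2B Gam kap_c sigma taut.
have taut_gt0 : 0 < taut by rewrite lt_min taum1_gt0 mulr_gt0 ?divr_gt0 ?subr_gt0.
have N_gt0 : 0 < N by apply: model_const_gt0.
exists taut, (Num.min num1 ((1 - eps) * N)); split => //; split.
  by rewrite lt_min num1_gt0 mulr_gt0 ?subr_gt0.
move=> xi D Dt dG dB abar x lam gbar Gbar Gt Bbar Bt dx dl tau nu D_bd _ _ _ gbar_def
  _ _ _ _ _ _ kkt_dual kkt_primal tau_def nu_def _ _ _ X_pts c_le _ GGt_ge B_ker_ge B_le.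
have gbar_le : forall k, enorm (gbar k) <= Gam.
  apply: enorm_average_le beta01 _ _ gbar_def; first by rewrite le_max lexx.
  move=> k; have [_ Xp Xm _ _] := X_pts k; rewrite le_max; apply/orP; right.
  exact: enorm_spF_le cX Xp Xm (F_grad (xi k)) (gradF_le (xi k)) (b_gt0 k) kD1_gt0
    (ltW kD2_gt0) (D_bd k).
have GGt_coercive k w : k1Gt * dotv w w <= dotv w (Gt k *m (Gt k)^T *m w).
  by case/andP: (GGt_ge k w).
apply: (parameters_eventually_constant sigma_lt1 eps_gt0 eps_lt1 taum1_gt0 num1_gt0 Cs_gt0
  N_gt0 tau_def nu_def) => [k|k t taut_le decrease].
  exact: sqp_slope_le k1Gt_gt0 k1B_gt0 k2B_gt0 Gam_ge0 (GGt_coercive k) (B_ker_ge k) (B_le k)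
    (gbar_le k) (kkt_dual k) (kkt_primal k) (c_le k).
by apply: (sqp_model_reduction_ge k1Gt_gt0 k1B_gt0 k2B_gt0 Gam_ge0 kap_gt0 (GGt_coercive k)
  (B_ker_ge k) (B_le k) (gbar_le k) (kkt_dual k) (kkt_primal k) (c_le k) sigma_gt0
  taut_gt0).
Qed.
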